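(* Let $r_1,r_2:\mathcal{X}\times\mathcal{Y}\to\mathbb{R}$ satisfy $\|r_1\|_\infty\le C$ and $\|r_2\|_\infty\le C$. For $x\in\mathcal{X}$ and $y_1,y_2\in\mathcal{Y}$ let $\delta_x(r_1,r_2,y_1,y_2)=r_1(x,y_1)-r_1(x,y_2)-(r_2(x,y_1)-r_2(x,y_2))$. Then $$\delta_x(r_1,r_2,y_1,y_2)^2\le 2(3+\exp(2C))^2\,D_{\mathrm H}^2\big(\mathbb{P}_{r_1}(\cdot|x,y_1,y_2)\,\|\,\mathbb{P}_{r_2}(\cdot|x,y_1,y_2)\big).$$
   Context: For a reward $r$, $\mathbb{P}_r(\cdot|x,y_1,y_2)$ is the Bernoulli distribution of the outcome of comparing $(x,y_1)$ and $(x,y_2)$ under the Bradley–Terry model, with $\mathbb{P}_r(y_1\succ y_2|x)=\sigma(r(x,y_1)-r(x,y_2))$ and $\sigma$ the logistic function. The squared Hellinger distance between distributions $P,Q$ on a finite set is $D_{\mathrm H}^2(P\|Q)=\frac12\sum_\omega(\sqrt{P(\omega)}-\sqrt{Q(\omega)})^2$. *)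

From Stdlib Require Import Reals.
Open Scope R_scope.

Definition sigma (t : R) : R := 1 / (1 + exp (- t)).

(* Bradley--Terry comparison distribution P_r(. | x, y1, y2) on the two
   outcomes: true = "y1 preferred to y2", false = "y2 preferred to y1". *)
Definition bt_dist {X Y : Type} (r : X -> Y -> R) (x : X) (y1 y2 : Y)
  : bool -> R :=
  fun b => if b then sigma (r x y1 - r x y2) else 1 - sigma (r x y1 - r x y2).

Definition hellinger2 (P Q : bool -> R) : R :=
  / 2 * ((sqrt (P true) - sqrt (Q true)) ^ 2
         + (sqrt (P false) - sqrt (Q false)) ^ 2).

Definition delta {X Y : Type} (r1 r2 : X -> Y -> R) (x : X) (y1 y2 : Y) : R :=
  r1 x y1 - r1 x y2 - (r2 x y1 - r2 x y2).

(* Write [a] and [b] for the two reward gaps [r1 x y1 - r1 x y2] and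
   [r2 x y1 - r2 x y2], so that [delta = a - b] and both gaps lie in
   [[-2C, 2C]].  Since [sigma' t = / (2 + exp t + exp (- t)) >= / (3 + exp (2C))]
   on that interval, the mean value theorem gives
   [|a - b| <= (3 + exp (2C)) |sigma a - sigma b|].  For two Bernoulli laws of
   parameters [p], [q], writing [p - q] as a combination of the differences of
   square roots and applying Cauchy-Schwarz yields [(p - q)^2 <= 2 H^2]. *)

From Stdlib Require Import Reals Lra Psatz.
From Coquelicot Require Import Coquelicot.
(* Imported after Coquelicot, which also defines a [sigma] (finite sums). *)
Open Scope R_scope.

Lemma exp_le_compat (x y : R) : x <= y -> exp x <= exp y.
Proof.
  intros [Hlt | ->]; [left; now apply exp_increasing | now right].
Qed.

Lemma exp_add_exp_opp_le (M c : R) : Rabs c <= M -> exp c + exp (- c) <= exp M + 1.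
Proof.
  intros Hc; apply Rabs_le_between in Hc.
  assert (Hinv : exp c * exp (- c) = 1)
    by now rewrite <- exp_plus, Rplus_opp_r, exp_0.
  pose proof (exp_pos c); pose proof (exp_pos (- c)).
  destruct (Rle_or_lt 0 c) as [Hc0 | Hc0].
  - assert (exp c <= exp M) by (apply exp_le_compat; lra).
    assert (1 <= exp c) by (rewrite <- exp_0; apply exp_le_compat; lra).
    nra.
  - assert (exp (- c) <= exp M) by (apply exp_le_compat; lra).
    assert (1 <= exp (- c)) by (rewrite <- exp_0; apply exp_le_compat; lra).
    nra.
Qed.

Lemma sigma_bounds (t : R) : 0 < sigma t < 1.
Proof.
  unfold sigma; pose proof (exp_pos (- t)); split.
  - apply Rdiv_lt_0_compat; lra.
  - apply Rmult_lt_reg_r with (1 + exp (- t)); [lra |].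
    field_simplify; lra.
Qed.

Lemma is_derive_sigma (t : R) : is_derive sigma t (/ (2 + exp t + exp (- t))).
Proof.
  assert (Hinv : exp t * exp (- t) = 1)
    by now rewrite <- exp_plus, Rplus_opp_r, exp_0.
  pose proof (exp_pos t); pose proof (exp_pos (- t)).
  unfold sigma; auto_derive; [lra |].
  apply Rmult_eq_reg_r with ((1 + exp (- t)) ^ 2 * (2 + exp t + exp (- t)));
    [| nra].
  field_simplify; [nra | lra | nra].
Qed.

Lemma sigma_inv_lipschitz (M a b : R) :
  Rabs a <= M -> Rabs b <= M ->
  Rabs (a - b) <= (3 + exp M) * Rabs (sigma a - sigma b).
Proof.
  intros Ha Hb.
  destruct (MVT_gen sigma a b (fun t => / (2 + exp t + exp (- t))))
    as [c [Hc Hmvt]].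
  - intros t _; apply is_derive_sigma.
  - intros t _; apply continuity_pt_filterlim.
    exact (ex_derive_continuous sigma t (ex_intro _ _ (is_derive_sigma t))).
  - assert (Hcb : exp c + exp (- c) <= exp M + 1).
    { apply exp_add_exp_opp_le, Rabs_le_between.
      apply Rabs_le_between in Ha; apply Rabs_le_between in Hb.
      unfold Rmin, Rmax in Hc; destruct (Rle_dec a b); lra. }
    pose proof (exp_pos c); pose proof (exp_pos (- c)).
    set (D := 2 + exp c + exp (- c)) in Hmvt, Hcb.
    assert (Hgap : a - b = D * (sigma a - sigma b)).
    { replace (sigma a - sigma b) with (/ D * (a - b)) by lra.
      field; unfold D; lra. }
    rewrite Hgap, Rabs_mult, (Rabs_pos_eq D) by (unfold D; lra).
    apply Rmult_le_compat_r; [apply Rabs_pos | unfold D; lra].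
Qed.

Lemma sqr_diff_sqr_le_dist2_unit_circle (s1 t1 s2 t2 : R) :
  s1 ^ 2 + t1 ^ 2 = 1 -> s2 ^ 2 + t2 ^ 2 = 1 ->
  (s1 ^ 2 - s2 ^ 2) ^ 2 <= (s1 - s2) ^ 2 + (t1 - t2) ^ 2.
Proof.
  intros Hu1 Hu2.
  set (d := s1 ^ 2 - s2 ^ 2).
  (* [2d = (s1 - s2)(s1 + s2) + (t2 - t1)(t2 + t1)]; apply Cauchy-Schwarz and
     [(s1 + s2)^2 + (t1 + t2)^2 = 4 - (s1 - s2)^2 - (t1 - t2)^2 <= 4]. *)
  assert (Hd : 2 * d = (s1 - s2) * (s1 + s2) + (t2 - t1) * (t2 + t1))
    by (unfold d; nra).
  assert (Hcs : (2 * d) ^ 2 <= ((s1 - s2) ^ 2 + (t1 - t2) ^ 2)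
                                * ((s1 + s2) ^ 2 + (t1 + t2) ^ 2)).
  { rewrite Hd.
    pose proof (pow2_ge_0 ((s1 - s2) * (t2 + t1) - (t2 - t1) * (s1 + s2))).
    nra. }
  assert (Hsum : (s1 + s2) ^ 2 + (t1 + t2) ^ 2
                 = 4 - ((s1 - s2) ^ 2 + (t1 - t2) ^ 2)) by nra.
  pose proof (pow2_ge_0 (s1 - s2)); pose proof (pow2_ge_0 (t1 - t2)).
  nra.
Qed.

Definition bernoulli (p : R) : bool -> R := fun b => if b then p else 1 - p.

Lemma bernoulli_sqr_diff_le_hellinger2 (p q : R) :
  0 <= p <= 1 -> 0 <= q <= 1 ->
  (p - q) ^ 2 <= 2 * hellinger2 (bernoulli p) (bernoulli q).
Proof.
  intros Hp Hq; unfold hellinger2, bernoulli.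
  pose proof (sqr_diff_sqr_le_dist2_unit_circle (sqrt p) (sqrt (1 - p)) (sqrt q) (sqrt (1 - q)))
    as Hchord.
  rewrite !pow2_sqrt in Hchord by lra.
  specialize (Hchord ltac:(lra) ltac:(lra)).
  lra.
Qed.

Lemma Rabs_sub_le_double (C u v : R) : Rabs u <= C -> Rabs v <= C -> Rabs (u - v) <= 2 * C.
Proof.
  intros Hu Hv; apply Rabs_le_between in Hu; apply Rabs_le_between in Hv.
  apply Rabs_le_between; lra.
Qed.

Theorem lemma4 (X Y : Type) (C : R) (r1 r2 : X -> Y -> R)
  (h1 : forall x y, Rabs (r1 x y) <= C)
  (h2 : forall x y, Rabs (r2 x y) <= C)
  (x : X) (y1 y2 : Y) :
  (delta r1 r2 x y1 y2) ^ 2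
  <= 2 * (3 + exp (2 * C)) ^ 2
       * hellinger2 (bt_dist r1 x y1 y2) (bt_dist r2 x y1 y2).
Proof.
  set (a := r1 x y1 - r1 x y2); set (b := r2 x y1 - r2 x y2).
  change (bt_dist r1 x y1 y2) with (bernoulli (sigma a)).
  change (bt_dist r2 x y1 y2) with (bernoulli (sigma b)).
  change (delta r1 r2 x y1 y2) with (a - b).
  set (K := 3 + exp (2 * C)).
  assert (Hlip : Rabs (a - b) <= K * Rabs (sigma a - sigma b))
    by (apply sigma_inv_lipschitz; apply Rabs_sub_le_double; auto).
  assert (Hsq : (a - b) ^ 2 <= K ^ 2 * (sigma a - sigma b) ^ 2).
  { rewrite <- pow2_abs, <- (pow2_abs (sigma a - sigma b)), <- Rpow_mult_distr.
    apply pow_incr; split; [apply Rabs_pos | exact Hlip]. }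
  pose proof (sigma_bounds a); pose proof (sigma_bounds b).
  pose proof (bernoulli_sqr_diff_le_hellinger2 (sigma a) (sigma b)
                ltac:(lra) ltac:(lra)) as Hhel.
  pose proof (pow2_ge_0 K).
  nra.
Qed.
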